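(* Let $q$ be an odd prime power, $f$ a planar function on $\mathbb F_{q^2}$, and $\theta\in\mathbb F_{q^2}^*$ such that for every $c\in\mathbb F_q$, $\#\{x\in\mathbb F_{q^2}:\theta_1f_0(x)-\theta_0f_1(x)=c\}$ equals $q+1$ if $c\neq0$ and $1$ if $c=0$. Then the unital $\mathcal U_\theta:=\{(x,t\theta):x\in\mathbb F_{q^2},t\in\mathbb F_q\}\cup\{(\infty)\}$ of order $q$ in $\Pi(f)$ is self-dual.
   Context: A function $f:\mathbb F_{q^2}\to\mathbb F_{q^2}$ is planar if for every $a\neq0$ the map $x\mapsto f(x+a)-f(x)$ is a bijection. For planar $f$, $\Pi(f)$ is the projective plane with points $(x,y)\in\mathbb F_{q^2}^2$ and $(a)$ for $a\in\mathbb F_{q^2}\cup\{\infty\}$, and lines $L_{a,b}=\{(x,f(x+a)-b):x\in\mathbb F_{q^2}\}\cup\{(a)\}$, $N_a=\{(a,y):y\in\mathbb F_{q^2}\}\cup\{(\infty)\}$ ($a,b\in\mathbb F_{q^2}$), $L_\infty=\{(a):a\in\mathbb F_{q^2}\cup\{\infty\}\}$, incidence being membership. A fixed $\xi\in\mathbb F_{q^2}\setminus\mathbb F_q$ is chosen; $\theta=\theta_0+\theta_1\xi$ and $f(x)=f_0(x)+f_1(x)\xi$ with $\theta_i,f_i(x)\in\mathbb F_q$. A unital $\mathcal U$ embedded in a projective plane $\Pi$ of order $q^2$ (a set of $q^3+1$ points meeting each line in $1$ or $q+1$ points) is viewed as the $2$-$(q^3+1,q+1,1)$ design whose blocks are the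 intersections with lines meeting it in $q+1$ points. Its dual unital $\mathcal U^*$ is the design whose points are the tangent lines of $\mathcal U$ (lines meeting it in exactly one point) and whose blocks correspond to the points of $\Pi$ not in $\mathcal U$, a tangent line being incident with such a point if it contains it. $\mathcal U$ is self-dual if $\mathcal U$ and $\mathcal U^*$ are isomorphic as designs. *)

From HB Require Import structures.
From mathcomp Require Import all_boot all_order all_algebra all_field.
Set Implicit Arguments. Unset Strict Implicit. Unset Printing Implicit Defensive.
Import GRing.Theory.
Local Open Scope ring_scope.

(* F plays the role of F_{q^2}; its subfield F_q is {x | x^q = x}. *)
Definition subFq (F : finFieldType) (q : nat) : {set F} := [set x : F | x ^+ q == x].

(* Coordinates w.r.t. the basis {1, xi} of F_{q^2} over F_q:
   x = xicoord0 x + xicoord1 x * xi with xicoord0 x, xicoord1 x in F_q.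
   Explicitly, xicoord1 x = (x - x^q) / (xi - xi^q). *)
Definition xicoord1 (F : finFieldType) (q : nat) (xi x : F) : F :=
  (x - x ^+ q) / (xi - xi ^+ q).
Definition xicoord0 (F : finFieldType) (q : nat) (xi x : F) : F :=
  x - xicoord1 q xi x * xi.

Definition planar (F : finFieldType) (f : F -> F) : Prop :=
  forall a : F, a != 0 -> bijective (fun x => f (x + a) - f x).

(* Points of Pi(f): inl (x,y) is the affine point (x,y);
   inr (Some a) is (a), inr None is (infinity). *)
Definition ppoint (F : finFieldType) : finType := ((F * F) + option F)%type.
(* Lines: inl (a,b) is L_{a,b}; inr (inl a) is N_a; inr (inr tt) is L_infinity. *)
Definition pline (F : finFieldType) : finType := ((F * F) + (F + unit))%type.

Definition pinc (F : finFieldType) (f : F -> F) (P : ppoint F) (L : pline F) : bool :=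
  match L, P with
  | inl (a, b), inl (x, y) => y == f (x + a) - b
  | inl (a, b), inr (Some c) => c == a
  | inl _, inr None => false
  | inr (inl a), inl (x, y) => x == a
  | inr (inl a), inr None => true
  | inr (inl a), inr (Some _) => false
  | inr (inr _), inl _ => false
  | inr (inr _), inr _ => true
  end.

Definition meet (F : finFieldType) (f : F -> F) (U : {set ppoint F}) (L : pline F) : nat :=
  #|[set P in U | pinc f P L]|.

Definition is_unital (F : finFieldType) (f : F -> F) (q : nat) (U : {set ppoint F}) : Prop :=
  #|U| = (q ^ 3).+1 /\ forall L : pline F, meet f U L = 1%N \/ meet f U L = q.+1.

Definition upoint (F : finFieldType) (U : {set ppoint F}) : finType :=
  {P : ppoint F | P \in U}.
Definition ublock (F : finFieldType) (f : F -> F) (q : nat) (U : {set ppoint F}) : finType :=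
  {L : pline F | meet f U L == q.+1}.
Definition uinc (F : finFieldType) (f : F -> F) (q : nat) (U : {set ppoint F})
  (P : upoint U) (B : ublock f q U) : bool := pinc f (val P) (val B).

Definition dpoint (F : finFieldType) (f : F -> F) (U : {set ppoint F}) : finType :=
  {L : pline F | meet f U L == 1%N}.
Definition dblock (F : finFieldType) (U : {set ppoint F}) : finType :=
  {P : ppoint F | P \notin U}.
Definition dinc (F : finFieldType) (f : F -> F) (U : {set ppoint F})
  (L : dpoint f U) (B : dblock U) : bool := pinc f (val B) (val L).

Definition design_iso (P1 B1 P2 B2 : finType) (I1 : P1 -> B1 -> bool)
  (I2 : P2 -> B2 -> bool) : Prop :=
  exists (phi : P1 -> P2) (psi : B1 -> B2),
    [/\ bijective phi, bijective psi & forall p b, I1 p b = I2 (phi p) (psi b)].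

Definition self_dual (F : finFieldType) (f : F -> F) (q : nat) (U : {set ppoint F}) : Prop :=
  design_iso (@uinc F f q U) (@dinc F f U).

Definition Utheta (F : finFieldType) (q : nat) (theta : F) : {set ppoint F} :=
  inr None |: [set P : ppoint F |
     if P is inl (x, y) then [exists t in subFq F q, y == t * theta] else false].

(** The map sending the point (x, y) to the line L_{x,y}, (a) to N_a and (oo)
    to L_oo is a polarity of Pi(f), because y = f(x + a) - b is symmetric in
    (x, y) and (a, b).  Write K(y) = theta_1 y_0 - theta_0 y_1; it is F_q-valued,
    additive and vanishes exactly on F_q theta.  Hence a point lies on U_theta
    iff its polar line is tangent to U_theta: the polar line of (a, b) meets
    U_theta in the translated fibre {x | K(f x) = K b}, of size 1 or q + 1 by
    hypothesis, N_a meets it in q + 1 points and L_oo only in (oo).  A polarity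
    exchanging points of U and tangents, and points off U and secants, is an
    isomorphism from U onto its dual.  That |F_q| = q, needed for the counts,
    also follows from the hypothesis: the fibres of K o f partition F_{q^2}. *)
From HB Require Import structures.
From mathcomp Require Import all_boot all_order all_algebra all_field.
From mathcomp Require Import ring.
Set Implicit Arguments.
Unset Strict Implicit.
Unset Printing Implicit Defensive.
Import GRing.Theory.
Local Open Scope ring_scope.

Section Polarity.

Variables (F : finFieldType) (f : F -> F).

Definition polar_point (P : ppoint F) : pline F :=
  match P with
  | inl xy => inl xy
  | inr (Some a) => inr (inl a)
  | inr None => inr (inr tt)
  end.

Definition polar_line (L : pline F) : ppoint F :=
  match L with
  | inl ab => inl ab
  | inr (inl a) => inr (Some a)
  | inr (inr _) => inr None
  end.

Lemma polar_pointK : cancel polar_point polar_line.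
Proof. by case=> [?|[?|]]. Qed.

Lemma polar_lineK : cancel polar_line polar_point.
Proof. by case=> [?|[?|[]]]. Qed.

Lemma pinc_polar (P : ppoint F) (L : pline F) :
  pinc f P L = pinc f (polar_line L) (polar_point P).
Proof.
case: L => [[a b]|[a|[]]]; case: P => [[x y]|[c|]] //=; try exact: eq_sym.
by rewrite (addrC a x); apply/eqP/eqP => ->; rewrite subKr.
Qed.

Variables (q : nat) (U : {set ppoint F}).
Hypothesis q_gt0 : (0 < q)%N.
Hypothesis meet_polar :
  forall P, meet f U (polar_point P) = if P \in U then 1%N else q.+1.

Lemma meet_polar_dichotomy (L : pline F) : meet f U L = 1%N \/ meet f U L = q.+1.
Proof. by rewrite -(polar_lineK L) meet_polar; case: ifP; auto. Qed.

Lemma mem_polar_tangent (L : pline F) : (meet f U L == 1%N) = (polar_line L \in U).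
Proof.
rewrite -{1}(polar_lineK L) meet_polar.
by case: ifP; rewrite ?eqxx // eqSS; case: (q) q_gt0.
Qed.

Lemma self_dual_polar : self_dual f q U.
Proof.
have tangent_polar (P : upoint U) : meet f U (polar_point (val P)) == 1%N.
  by rewrite mem_polar_tangent polar_pointK (valP P).
have in_polar (L : dpoint f U) : polar_line (val L) \in U.
  by rewrite -mem_polar_tangent (valP L).
have notin_polar (B : ublock f q U) : polar_line (val B) \notin U.
  by rewrite -mem_polar_tangent (eqP (valP B)) eqSS -lt0n q_gt0.
have secant_polar (B : dblock U) : meet f U (polar_point (val B)) == q.+1.
  by rewrite meet_polar (negbTE (valP B)).
pose phi (P : upoint U) : dpoint f U := Sub (polar_point (val P)) (tangent_polar P).
pose phi' (L : dpoint f U) : upoint U := Sub (polar_line (val L)) (in_polar L).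
pose psi (B : ublock f q U) : dblock U := Sub (polar_line (val B)) (notin_polar B).
pose psi' (B : dblock U) : ublock f q U :=
  Sub (polar_point (val B)) (secant_polar B).
exists phi, psi; split.
- by exists phi' => ?; apply: val_inj; rewrite /= ?polar_pointK ?polar_lineK.
- by exists psi' => ?; apply: val_inj; rewrite /= ?polar_pointK ?polar_lineK.
- by move=> P B; rewrite /uinc /dinc /= pinc_polar.
Qed.

End Polarity.

Section CoordinateDeterminant.

Variables (F : finFieldType) (q : nat) (xi : F).

Definition xidet (theta y : F) : F :=
  xicoord1 q xi theta * xicoord0 q xi y - xicoord0 q xi theta * xicoord1 q xi y.

Lemma xidetE (theta y : F) :
  xidet theta y = (theta * y ^+ q - theta ^+ q * y) / (xi - xi ^+ q).
Proof. by rewrite /xidet /xicoord0 /xicoord1; ring. Qed.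

Hypothesis xiq_neq : xi ^+ q != xi.

Let xi_diff_neq0 : xi - xi ^+ q != 0.
Proof. by rewrite subr_eq0 eq_sym. Qed.

Lemma xidet_eq0 (theta y : F) :
  theta != 0 -> (xidet theta y == 0) = (y / theta \in subFq F q).
Proof.
move=> theta0; have thetaq0 : theta ^+ q != 0 by rewrite expf_neq0.
rewrite xidetE mulf_eq0 invr_eq0 (negbTE xi_diff_neq0) orbF subr_eq0.
rewrite inE exprMn exprVn; apply/eqP/eqP=> eq_y.
  by rewrite -(mulKf theta0 (y ^+ q)) eq_y; field; rewrite thetaq0 theta0.
by rewrite -(divfK thetaq0 (y ^+ q)) eq_y; field.
Qed.

Hypothesis q_pchar : [pchar F].-nat q.
Hypothesis cardF : #|F| = (q ^ 2)%N.

Let frobB (x y : F) : (x - y) ^+ q = x ^+ q - y ^+ q.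
Proof. by rewrite exprDn_pchar // exprNn_pchar. Qed.

Let frobK (x : F) : x ^+ q ^+ q = x.
Proof. by rewrite -exprM mulnn -cardF expf_card. Qed.

Lemma xidetB (theta : F) : {morph xidet theta : u v / u - v}.
Proof. by move=> u v; rewrite !xidetE frobB; ring. Qed.

Lemma xidet_subFq (theta y : F) : xidet theta y \in subFq F q.
Proof.
have xi_diff'_neq0 : xi ^+ q - xi != 0 by rewrite subr_eq0.
rewrite inE xidetE exprMn exprVn !frobB !exprMn !frobK; apply/eqP.
by field; rewrite xi_diff'_neq0 xi_diff_neq0.
Qed.

End CoordinateDeterminant.

Lemma card_fibres (T R : finType) (g : T -> R) (S : {set R}) (z : R) (n : nat) :
  (forall x, g x \in S) -> z \in S ->
  (forall c, c \in S -> #|[set x | g x == c]| = if c == z then 1%N else n.+1) ->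
  (#|T| + n = #|S| * n.+1)%N.
Proof.
move=> gS zS fibre.
have -> : #|T| = \sum_(c in S) #|[set x | g x == c]|.
  rewrite -sum1_card (partition_big g (mem S)) //=.
  by apply: eq_bigr => c _; rewrite sum1dep_card.
rewrite (bigD1 z) //= fibre // eqxx (cardsD1 z S) zS.
rewrite (eq_bigr (fun _ => n.+1)); last first.
  by move=> c /andP[cS /negbTE cz]; rewrite fibre // cz.
rewrite sum_nat_const; set m := #|_|; set m' := #|_|.
have -> : m = m' by apply: eq_card => c; rewrite !inE andbC.
by rewrite mulSn addnC addnA addn1.
Qed.

Section UnitalUtheta.

Variables (F : finFieldType) (q : nat) (theta : F).
Hypothesis theta0 : theta != 0.

Local Notation U := (Utheta q theta).

Lemma mem_Utheta (x y : F) : (inl (x, y) \in U) = (y / theta \in subFq F q).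
Proof.
rewrite /Utheta in_setU1 /= inE /=; apply/existsP/idP => [[t /andP[tS /eqP ->]]|yS].
  by rewrite mulfK.
by exists (y / theta); rewrite yS divfK ?eqxx.
Qed.

Lemma Utheta_oo : inr None \in U.
Proof. by rewrite !inE. Qed.

Lemma Utheta_Some (a : F) : (inr (Some a) \in U) = false.
Proof. by rewrite !inE. Qed.

Lemma card_Utheta : #|U| = (#|F| * #|subFq F q|).+1.
Proof.
have -> : U = inr None |:
    [set (inl (u.1, u.2 * theta) : ppoint F) | u in setX [set: F] (subFq F q)].
  apply/setP => -[[x y]|[a|]];
    rewrite ?mem_Utheta ?Utheta_Some ?Utheta_oo in_setU1 //=.
  - apply/idP/imsetP => [yS|[[x' t]]].
      by exists (x, y / theta); rewrite ?in_setX ?in_setT ?divfK.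
    by rewrite in_setX /= => /andP[_ tS] [_ ->]; rewrite mulfK.
  - by apply/esym/negbTE/imsetP => -[].
rewrite cardsU1 card_imset ?cardsX ?cardsT; last first.
  by move=> [x1 t1] [x2 t2] [] -> /(mulIf theta0) ->.
by rewrite (_ : (inr None \in _) = false) //; apply/negbTE/imsetP => -[].
Qed.

Variable f : F -> F.

Lemma meet_Utheta_Loo : meet f U (inr (inr tt)) = 1%N.
Proof.
rewrite /meet -(cards1 (inr None : ppoint F)); apply: eq_card => P; rewrite !inE.
by case: P => [[x y]|[a|]] /=; rewrite ?Utheta_Some ?Utheta_oo ?andbF.
Qed.

Lemma meet_Utheta_N (a : F) : meet f U (inr (inl a)) = #|subFq F q|.+1.
Proof.
rewrite /meet; have -> : [set P in U | pinc f P (inr (inl a))] =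
    inr None |: [set (inl (a, t * theta) : ppoint F) | t in subFq F q].
  apply/setP => -[[x y]|[c|]];
    rewrite in_set ?mem_Utheta ?Utheta_Some ?Utheta_oo in_setU1 //=.
  - apply/idP/imsetP => [/andP[yS /eqP ->]|[t tS [-> ->]]].
      by exists (y / theta); rewrite ?divfK.
    by rewrite mulfK ?tS ?eqxx.
  - by apply/esym/negbTE/imsetP => -[].
rewrite cardsU1 card_imset; last by move=> t1 t2 [] /(mulIf theta0).
by rewrite (_ : (inr None \in _) = false) //; apply/negbTE/imsetP => -[].
Qed.

End UnitalUtheta.

Section PolarityUtheta.

Variables (F : finFieldType) (q : nat) (xi theta : F) (f : F -> F).
Hypothesis theta0 : theta != 0.
Hypothesis xiq_neq : xi ^+ q != xi.
Hypothesis q_pchar : [pchar F].-nat q.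
Hypothesis cardF : #|F| = (q ^ 2)%N.

Local Notation U := (Utheta q theta).
Local Notation K := (xidet q xi theta).

Lemma mem_Utheta_xidet (x y : F) : (inl (x, y) \in U) = (K y == 0).
Proof. by rewrite mem_Utheta // xidet_eq0. Qed.

Lemma meet_Utheta_L (a b : F) : meet f U (inl (a, b)) = #|[set x | K (f x) == K b]|.
Proof.
rewrite /meet -(card_imset (mem [set x | K (f x) == K b])
                 (f := fun x => (inl (x - a, f x - b) : ppoint F))); last first.
  by move=> x1 x2 [] /addIr.
apply: eq_card => -[[x y]|[c|]]; rewrite in_set ?mem_Utheta_xidet ?Utheta_Some /=.
- apply/idP/imsetP => [/andP[Ky /eqP ye]|[z]].
    exists (x + a); last by rewrite addrK -ye.
    by rewrite inE -subr_eq0 -xidetB // -ye.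
  by rewrite inE => /eqP Kz [-> ->]; rewrite subrK eqxx andbT xidetB // Kz subrr.
- by apply/esym/negbTE/imsetP => -[].
- by rewrite andbF; apply/esym/negbTE/imsetP => -[].
Qed.

Hypothesis q_gt0 : (0 < q)%N.
Hypothesis fibres : forall c, c \in subFq F q ->
  #|[set x | K (f x) == c]| = if c == 0 then 1%N else q.+1.

Lemma card_subFq : #|subFq F q| = q.
Proof.
have zero_subFq : (0 : F) \in subFq F q by rewrite inE expr0n gtn_eqF.
have := card_fibres (fun x => xidet_subFq xiq_neq q_pchar cardF theta (f x))
  zero_subFq fibres.
rewrite cardF -mulnn -mulnSr => /eqP; rewrite eqn_pmul2r //.
by move/eqP/esym.
Qed.

Lemma meet_polar_Utheta (P : ppoint F) :
  meet f U (polar_point P) = if P \in U then 1%N else q.+1.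
Proof.
case: P => [[x y]|[a|]] /=.
- by rewrite meet_Utheta_L mem_Utheta_xidet fibres ?xidet_subFq.
- by rewrite meet_Utheta_N // Utheta_Some card_subFq.
- by rewrite meet_Utheta_Loo Utheta_oo.
Qed.

End PolarityUtheta.

Theorem proposition3p4 (F : finFieldType) (q : nat) (xi theta : F) (f : F -> F) :
  (exists p k : nat, [/\ prime p, 0 < k & q = p ^ k]%N) ->
  odd q ->
  #|F| = (q ^ 2)%N ->
  xi ^+ q != xi ->
  planar f ->
  theta != 0 ->
  (forall c : F, c \in subFq F q ->
     #|[set x : F | xicoord1 q xi theta * xicoord0 q xi (f x)
                    - xicoord0 q xi theta * xicoord1 q xi (f x) == c]|
     = (if c == 0 then 1%N else q.+1)) ->
  is_unital f q (Utheta q theta) /\ self_dual f q (Utheta q theta).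
Proof.
(* Planarity is what makes Pi(f) a projective plane; the counts do not need it. *)
move=> [p [k [p_prime k_gt0 qE]]] odd_q cardF xiq_neq _ theta0 fibres.
have p_char : p \in [pchar F].
  by apply: (@card_finPcharP F p (k * 2)) => //; rewrite cardF qE expnM.
have q_pchar : [pchar F].-nat q.
  by rewrite qE pnatX (eq_pnat _ (pcharf_eq p_char)) pnat_id.
have q_gt0 : (0 < q)%N by rewrite odd_gt0.
have meet_polar := meet_polar_Utheta theta0 xiq_neq q_pchar cardF q_gt0 fibres.
split; last exact: self_dual_polar q_gt0 meet_polar.
split; last exact: meet_polar_dichotomy meet_polar.
by rewrite card_Utheta // cardF (card_subFq xiq_neq q_pchar cardF q_gt0 fibres)
  -expnSr.
Qed.
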